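(* Let $a,b$ be parameters with $a+b\notin\{0,-1,-2,\dots\}$, let $\Phi_{a,b}(z)={}_1F_1\left(\begin{array}{c}a\\ a+b\end{array};z\right)$ and let $(z_{a,b;k})_{k\ge1}$ be its zeros. Then for every integer $n\ge0$, \[ \zeta_{a,b}(\{2\}^n)=\frac{(-1)^n}{n!}\frac{(a)_n(b)_n}{(a+b)_n(a+b)_{2n}}. \] In particular $\zeta_{a,b}(\{2\})=-\frac{ab}{(a+b)^2(a+b+1)}$ and $\zeta_{a,b}(\{2,2\})=\frac{a(1+a)b(1+b)}{2(a+b)^2(1+a+b)^2(2+a+b)(3+a+b)}$.
   Context: $(x)_n=x(x+1)\cdots(x+n-1)$, $(x)_0=1$. ${}_1F_1\left(\begin{array}{c}a\\ c\end{array};z\right)=\sum_{p\ge0}\frac{(a)_p}{(c)_p}\frac{z^p}{p!}$. The zeros $z_{a,b;k}$ of $\Phi_{a,b}$ (counted with multiplicity, nonzero) satisfy the Weierstrass factorization $\Phi_{a,b}(z)=e^{\frac{a}{a+b}z}\prod_{k\ge1}\left(1-\frac{z}{z_{a,b;k}}\right)e^{z/z_{a,b;k}}$, with $\sum_k|z_{a,b;k}|^{-2}<\infty$. The multiple zeta value is $\zeta_{a,b}(\{2\}^n)=\sum_{k_1>k_2>\cdots>k_n\ge1}\prod_{i=1}^n z_{a,b;k_i}^{-2}$, with $\zeta_{a,b}(\{2\}^0)=1$; $\{2\}^n$ denotes the argument $2$ repeated $n$ times. *)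

From Stdlib Require Import Reals Factorial.
From Coquelicot Require Import Coquelicot.
Open Scope C_scope.

Fixpoint poch (x : C) (n : nat) : C :=
  match n with
  | O => 1
  | S m => poch x m * (x + RtoC (INR m))
  end.

Definition Cexp (z : C) : C :=
  (exp (fst z) * cos (snd z), exp (fst z) * sin (snd z))%R.

Definition Ccv (u : nat -> C) (l : C) : Prop :=
  forall eps : R, (0 < eps)%R ->
    exists N : nat, forall n : nat, (N <= n)%nat -> (Cmod (u n - l) < eps)%R.

Fixpoint Csum (N : nat) (f : nat -> C) : C :=
  match N with O => 0 | S M => Csum M f + f M end.
Fixpoint Cprod (N : nat) (f : nat -> C) : C :=
  match N with O => 1 | S M => Cprod M f * f M end.

Definition hyp1F1_partial (a c z : C) (N : nat) : C :=
  Csum N (fun p => poch a p / poch c p * (z ^ p) / RtoC (INR (fact p))).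

Definition is_hyp1F1 (a c z v : C) : Prop := Ccv (hyp1F1_partial a c z) v.

(* Elementary symmetric sum over strictly decreasing index tuples below N:
   esym x n N = sum_{N > k_1 > k_2 > ... > k_n >= 0} prod_i x k_i. *)
Fixpoint esym (x : nat -> C) (n N : nat) : C :=
  match n, N with
  | O, _ => 1
  | S _, O => 0
  | S m, S M => esym x n M + x M * esym x m M
  end.

(* The multiple zeta value zeta_{a,b}({2}^n), written in terms of the sequence
   w k = 1 / z_{a,b;k+1} of reciprocal zeros (w k = 0 is a padding entry, used when
   there are only finitely many zeros); it is the sum of the absolutely convergent
   series sum_{k_1 > ... > k_n} prod_i w_{k_i}^2, i.e. the limit of its truncations. *)
Definition is_zeta2 (w : nat -> C) (n : nat) (v : C) : Prop :=
  Ccv (fun N => esym (fun k => w k ^ 2) n N) v.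

(* The Weierstrass factorization of Phi_{a,b} = 1F1(a; a+b; .) with reciprocal
   zeros w, together with sum_k |z_k|^{-2} < infinity. *)
Definition weierstrass_zeros (a b : C) (w : nat -> C) : Prop :=
  (exists S : R, Ccv (fun N => Csum N (fun k => RtoC (Cmod (w k) ^ 2))) (RtoC S))
  /\
  (forall z : C, exists v : C,
     is_hyp1F1 a (a + b) z v /\
     Ccv (fun N => Cexp (a / (a + b) * z) *
                   Cprod N (fun k => (1 - z * w k) * Cexp (z * w k))) v).

(* Multiplying the Weierstrass products at [z] and [-z], the exponential
   factors cancel and [Phi(z) Phi(-z) = prod_k (1 - z^2 w_k^2)], whose
   coefficient of [z^(2n)] is [(-1)^n zeta({2}^n)].  On the other side the
   Cauchy product of the two 1F1 series has [z^m]-coefficient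
   [sum_j (-1)^j A_j A_(m-j)], [A_p = (a)_p / ((a+b)_p p!)]: it vanishes for odd
   [m] by symmetry, and for even [m] it satisfies a two-term recurrence
   (found by creative telescoping) solved by the closed form.  Since the
   product is infinite, coefficients are compared through its truncations:
   these are polynomials in [y = z^2] whose [n]-th coefficient is bounded by
   [(sum_k |w_k|^2)^n] uniformly in the truncation, and they converge, for
   small [y], to a function whose expansion is known to every order; such
   coefficients converge to those of the expansion. *)

From Stdlib Require Import Reals Factorial Lra Lia Psatz Wf_nat.
From Coquelicot Require Import Coquelicot.
Open Scope C_scope.

Fixpoint Rsum (N : nat) (f : nat -> R) : R :=
  match N with O => 0%R | S M => (Rsum M f + f M)%R end.

Lemma Csum_ext n f g : (forall i, (i < n)%nat -> f i = g i) -> Csum n f = Csum n g.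
Proof.
  induction n; simpl; intros H; auto.
  rewrite IHn, H by (auto; intros; apply H; lia). reflexivity.
Qed.

Lemma Csum_plus n f g : Csum n (fun i => f i + g i) = Csum n f + Csum n g.
Proof. induction n; simpl; [ring | rewrite IHn; ring]. Qed.

Lemma Csum_scal n c f : Csum n (fun i => c * f i) = c * Csum n f.
Proof. induction n; simpl; [ring | rewrite IHn; ring]. Qed.

Lemma Csum_opp n f : Csum n (fun i => - f i) = - Csum n f.
Proof. induction n; simpl; [ring | rewrite IHn; ring]. Qed.

Lemma Csum_minus n f g : Csum n (fun i => f i - g i) = Csum n f - Csum n g.
Proof. unfold Cminus. rewrite <- Csum_opp, <- Csum_plus. reflexivity. Qed.

Lemma Csum_mult_r n f c : Csum n f * c = Csum n (fun i => f i * c).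
Proof. induction n; simpl; [ring | rewrite <- IHn; ring]. Qed.

Lemma Csum_eq_0 n (f : nat -> C) : (forall i, (i < n)%nat -> f i = 0) -> Csum n f = 0.
Proof.
  intros H. rewrite (Csum_ext n f (fun _ => 0 * 0)), Csum_scal by (intros; rewrite H by auto; ring).
  ring.
Qed.

Lemma Csum_S_l n f : Csum (S n) f = f O + Csum n (fun i => f (S i)).
Proof.
  induction n; [simpl; ring |].
  change (Csum (S (S n)) f) with (Csum (S n) f + f (S n)).
  rewrite IHn. simpl. ring.
Qed.

Lemma Csum_add p q f : Csum (p + q) f = Csum p f + Csum q (fun i => f (p + i)%nat).
Proof.
  induction q; simpl; [rewrite Nat.add_0_r; ring |].
  rewrite Nat.add_succ_r. simpl. rewrite IHq. ring.
Qed.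

Lemma Csum_pad L L' (f : nat -> C) : (L <= L')%nat -> (forall i, (L <= i)%nat -> f i = 0) ->
  Csum L f = Csum L' f.
Proof.
  intros HL Hz. replace L' with (L + (L' - L))%nat by lia.
  rewrite Csum_add, (Csum_eq_0 (L' - L)) by (intros; apply Hz; lia). ring.
Qed.

Lemma Csum_rev n f : Csum n f = Csum n (fun i => f (n - 1 - i)%nat).
Proof.
  induction n; auto.
  rewrite (Csum_S_l n (fun i => f (S n - 1 - i)%nat)). simpl Csum at 1. rewrite IHn.
  replace (S n - 1 - 0)%nat with n by lia. rewrite Cplus_comm. f_equal.
  apply Csum_ext. intros. f_equal. lia.
Qed.

Lemma Csum_telescope n t G : (forall j, (j < n)%nat -> t j = G (S j) - G j) ->
  Csum n t = G n - G O.
Proof.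
  induction n; simpl; intros H; [ring |].
  rewrite IHn, H by (auto; intros; apply H; lia). ring.
Qed.

Lemma Csum_double D h :
  Csum (2 * D) h = Csum D (fun n => h (2 * n)%nat + h (2 * n + 1)%nat).
Proof.
  induction D; auto.
  replace (2 * S D)%nat with (S (S (2 * D))) by lia.
  change (Csum (S (S (2 * D))) h) with (Csum (2 * D) h + h (2 * D)%nat + h (S (2 * D))).
  rewrite IHD. replace (S (2 * D)) with (2 * D + 1)%nat by lia.
  change (Csum (S D) ?f) with (Csum D f + f D). cbv beta. ring.
Qed.

Lemma Csum_RtoC N r : Csum N (fun k => RtoC (r k)) = RtoC (Rsum N r).
Proof. induction N; simpl; auto. rewrite IHN, RtoC_plus. auto. Qed.

Lemma Rsum_ext n f g : (forall i, (i < n)%nat -> f i = g i) -> Rsum n f = Rsum n g.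
Proof.
  induction n; simpl; intros H; auto.
  rewrite IHn, H by (auto; intros; apply H; lia). reflexivity.
Qed.

Lemma Rsum_scal n c f : Rsum n (fun i => c * f i)%R = (c * Rsum n f)%R.
Proof. induction n; simpl; [ring | rewrite IHn; ring]. Qed.

Lemma Rsum_add p q f : Rsum (p + q) f = (Rsum p f + Rsum q (fun i => f (p + i)%nat))%R.
Proof.
  induction q; simpl; [rewrite Nat.add_0_r; ring |].
  rewrite Nat.add_succ_r. simpl. rewrite IHq. ring.
Qed.

Lemma Rsum_le n f g : (forall i, (i < n)%nat -> f i <= g i)%R -> (Rsum n f <= Rsum n g)%R.
Proof.
  induction n; simpl; intros H; [lra |].
  pose proof (H n ltac:(lia)). assert (Rsum n f <= Rsum n g)%R by (apply IHn; auto).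
  lra.
Qed.

Lemma Rsum_nonneg n f : (forall i, (i < n)%nat -> 0 <= f i)%R -> (0 <= Rsum n f)%R.
Proof.
  intros H. replace 0%R with (Rsum n (fun _ => 0 * 0)%R) by (rewrite Rsum_scal; ring).
  apply Rsum_le. intros. rewrite Rmult_0_l. auto.
Qed.

Lemma Rsum_term_le n f i : (forall i, (i < n)%nat -> 0 <= f i)%R -> (i < n)%nat ->
  (f i <= Rsum n f)%R.
Proof.
  intros H Hi. replace n with (i + 1 + (n - i - 1))%nat by lia.
  rewrite !Rsum_add. simpl.
  assert (0 <= Rsum i f)%R by (apply Rsum_nonneg; intros; apply H; lia).
  assert (0 <= Rsum (n - i - 1) (fun k => f (i + 1 + k)%nat))%R
    by (apply Rsum_nonneg; intros; apply H; lia).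
  rewrite Nat.add_0_r. lra.
Qed.

Lemma Rsum_geom_le_2 n q : (0 <= q <= 1/2)%R -> (Rsum n (fun i => q ^ i) <= 2)%R.
Proof.
  intros Hq.
  assert (H : (Rsum n (fun i => q ^ i) * (1 - q) = 1 - q ^ n)%R).
  { induction n; simpl; [ring |]. rewrite Rmult_plus_distr_r, IHn. ring. }
  assert (0 <= q ^ n)%R by (apply pow_le; lra).
  assert (0 <= Rsum n (fun i => q ^ i))%R by (apply Rsum_nonneg; intros; apply pow_le; lra).
  nra.
Qed.

Lemma Cmod_Csum_le n f : (Cmod (Csum n f) <= Rsum n (fun i => Cmod (f i)))%R.
Proof.
  induction n; simpl; [rewrite Cmod_0; lra |].
  eapply Rle_trans; [apply Cmod_triangle | lra].
Qed.

Lemma Cprod_ext n f g : (forall i, (i < n)%nat -> f i = g i) -> Cprod n f = Cprod n g.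
Proof.
  induction n; simpl; intros H; auto.
  rewrite IHn, H by (auto; intros; apply H; lia). reflexivity.
Qed.

Lemma Cprod_mult N f g : Cprod N f * Cprod N g = Cprod N (fun k => f k * g k).
Proof. induction N; simpl; [ring | rewrite <- IHN; ring]. Qed.

Lemma pow_le_1 (r : R) n : (0 <= r <= 1)%R -> (r ^ n <= 1)%R.
Proof. intros H. rewrite <- (pow1 n). apply pow_incr. lra. Qed.

Lemma Cmod_sub_triangle x y z : (Cmod (x - z) <= Cmod (x - y) + Cmod (y - z))%R.
Proof. replace (x - z) with ((x - y) + (y - z)) by ring. apply Cmod_triangle. Qed.

Lemma Cmod_sub_sym x y : Cmod (x - y) = Cmod (y - x).
Proof. replace (x - y) with (- (y - x)) by ring. apply Cmod_opp. Qed.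

Lemma Ccv_ext u v l : (forall n, u n = v n) -> Ccv u l -> Ccv v l.
Proof.
  intros E H eps He. destruct (H eps He) as [N HN].
  exists N. intros n Hn. rewrite <- E. auto.
Qed.

Lemma Ccv_const c : Ccv (fun _ => c) c.
Proof.
  intros eps He. exists O. intros.
  replace (c - c) with (RtoC 0) by ring. rewrite Cmod_0. lra.
Qed.

Lemma Ccv_plus u v l m : Ccv u l -> Ccv v m -> Ccv (fun n => u n + v n) (l + m).
Proof.
  intros Hu Hv eps He.
  destruct (Hu (eps/2)%R ltac:(lra)) as [N1 H1], (Hv (eps/2)%R ltac:(lra)) as [N2 H2].
  exists (N1 + N2)%nat. intros n Hn.
  specialize (H1 n ltac:(lia)). specialize (H2 n ltac:(lia)).
  replace (u n + v n - (l + m)) with ((u n - l) + (v n - m)) by ring.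
  eapply Rle_lt_trans; [apply Cmod_triangle | lra].
Qed.

Lemma Ccv_Csum k (u : nat -> nat -> C) (l : nat -> C) :
  (forall i, (i < k)%nat -> Ccv (u i) (l i)) ->
  Ccv (fun N => Csum k (fun i => u i N)) (Csum k l).
Proof.
  induction k; simpl; intros H; [apply Ccv_const |].
  apply Ccv_plus; [apply IHk; intros |]; apply H; lia.
Qed.

Lemma Ccv_bounded u l : Ccv u l -> exists B, (0 <= B)%R /\ forall n, (Cmod (u n) <= B)%R.
Proof.
  intros Hu. destruct (Hu 1%R ltac:(lra)) as [N HN].
  set (S := Rsum N (fun k => Cmod (u k))).
  assert (HS : (0 <= S)%R) by (apply Rsum_nonneg; intros; apply Cmod_ge_0).
  exists (S + Cmod l + 1)%R. pose proof (Cmod_ge_0 l). split; [lra |]. intros n.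
  destruct (Nat.lt_ge_cases n N) as [Hn | Hn].
  - assert (Cmod (u n) <= S)%R
      by (apply (Rsum_term_le N (fun k => Cmod (u k))); auto; intros; apply Cmod_ge_0).
    lra.
  - specialize (HN n Hn). pose proof (Cmod_triangle (u n - l) l).
    replace (u n - l + l) with (u n) in * by ring. lra.
Qed.

Lemma Ccv_mult u v l m : Ccv u l -> Ccv v m -> Ccv (fun n => u n * v n) (l * m).
Proof.
  intros Hu Hv. destruct (Ccv_bounded u l Hu) as [B [HB0 HB]].
  intros eps He. set (K := (B + Cmod m + 1)%R). pose proof (Cmod_ge_0 m).
  assert (Hd : (0 < eps / (2 * K))%R) by (apply Rdiv_lt_0_compat; unfold K; lra).
  destruct (Hu _ Hd) as [N1 H1], (Hv _ Hd) as [N2 H2].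
  exists (N1 + N2)%nat. intros n Hn.
  specialize (H1 n ltac:(lia)). specialize (H2 n ltac:(lia)). specialize (HB n).
  replace (u n * v n - l * m) with (u n * (v n - m) + (u n - l) * m) by ring.
  eapply Rle_lt_trans; [apply Cmod_triangle |]. rewrite !Cmod_mult.
  assert (Cmod (u n) * Cmod (v n - m) <= B * (eps / (2 * K)))%R
    by (apply Rmult_le_compat; auto using Cmod_ge_0; lra).
  assert (Cmod (u n - l) * Cmod m <= (eps / (2 * K)) * Cmod m)%R
    by (apply Rmult_le_compat_r; lra).
  assert (B * (eps / (2 * K)) + (eps / (2 * K)) * Cmod m < eps)%R.
  { replace (B * (eps / (2 * K)) + (eps / (2 * K)) * Cmod m)%R
      with (eps * ((B + Cmod m) / (2 * K)))%R by (field; unfold K; lra).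
    assert ((B + Cmod m) / (2 * K) < 1)%R
      by (apply (Rdiv_lt_1 (B + Cmod m) (2 * K)); unfold K; lra).
    nra. }
  lra.
Qed.

Lemma Ccv_le_limit u l v B N0 :
  Ccv u l -> (forall n, (N0 <= n)%nat -> Cmod (u n - v) <= B)%R -> (Cmod (l - v) <= B)%R.
Proof.
  intros Hu Hb. apply Rle_plus_epsilon. intros eps He.
  destruct (Hu eps He) as [N HN].
  specialize (HN (N + N0)%nat ltac:(lia)). specialize (Hb (N + N0)%nat ltac:(lia)).
  pose proof (Cmod_sub_triangle l (u (N + N0)%nat) v). rewrite Cmod_sub_sym in HN. lra.
Qed.

Lemma esym_0_l x N : esym x 0 N = 1.
Proof. destruct N; reflexivity. Qed.

Lemma esym_S x n N : esym x (S n) (S N) = esym x (S n) N + x N * esym x n N.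
Proof. reflexivity. Qed.

Lemma esym_eq_0 x N n : (N < n)%nat -> esym x n N = 0.
Proof.
  revert n. induction N; intros n H; destruct n; try lia; [reflexivity |].
  rewrite esym_S, !IHN by lia. ring.
Qed.

Lemma Cprod_1_plus_esym x t N :
  Cprod N (fun k => 1 + t * x k) = Csum (S N) (fun n => esym x n N * t ^ n).
Proof.
  induction N; [simpl; ring |].
  change (Cprod (S N) _) with (Cprod N (fun k => 1 + t * x k) * (1 + t * x N)).
  rewrite IHN, (Csum_S_l (S N)), esym_0_l.
  rewrite (Csum_ext (S N) (fun i => esym x (S i) (S N) * t ^ S i)
    (fun i => esym x (S i) N * t ^ S i + t * x N * (esym x i N * t ^ i)))
    by (intros; rewrite esym_S, Cpow_S; ring).
  rewrite Csum_plus, Csum_scal.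
  change (Csum (S N) (fun i => esym x (S i) N * t ^ S i))
    with (Csum N (fun i => esym x (S i) N * t ^ S i) + esym x (S N) N * t ^ S N).
  rewrite esym_eq_0, (Csum_S_l N (fun n => esym x n N * t ^ n)), esym_0_l by lia.
  simpl Cpow at 1. ring.
Qed.

Lemma Cmod_esym_le x N n : (Cmod (esym x n N) <= (Rsum N (fun k => Cmod (x k))) ^ n)%R.
Proof.
  revert n. induction N; intros n.
  - destruct n; simpl; [rewrite Cmod_1 | rewrite Cmod_0]; lra.
  - destruct n; [rewrite esym_0_l, Cmod_1; simpl; lra |].
    rewrite esym_S. simpl Rsum. pose proof (IHN (S n)) as HSn. pose proof (IHN n) as Hn.
    set (s := Rsum N (fun k => Cmod (x k))) in *. set (r := Cmod (x N)). fold s in HSn, Hn.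
    assert (Hs : (0 <= s)%R) by (apply Rsum_nonneg; intros; apply Cmod_ge_0).
    assert (Hr : (0 <= r)%R) by apply Cmod_ge_0.
    simpl pow in *.
    assert (Hsn : (0 <= s ^ n <= (s + r) ^ n)%R) by (split; [apply pow_le | apply pow_incr]; lra).
    eapply Rle_trans; [apply Cmod_triangle |]. rewrite Cmod_mult. fold r.
    assert (r * Cmod (esym x n N) <= r * s ^ n)%R by (apply Rmult_le_compat_l; auto).
    assert ((s + r) * s ^ n <= (s + r) * (s + r) ^ n)%R by (apply Rmult_le_compat_l; lra).
    lra.
Qed.

(** * Coefficients of a limit of polynomials *)

Lemma Cmod_RtoC_pow (y : R) n : (0 <= y)%R -> Cmod (RtoC y ^ n) = (y ^ n)%R.
Proof. intros Hy. rewrite Cmod_pow, Cmod_R, Rabs_pos_eq; auto. Qed.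

Lemma Csum_tail_le (f : nat -> C) (K y : R) (n T : nat) :
  (0 <= K)%R -> (0 < y)%R -> (K * y <= 1/2)%R -> (forall j, Cmod (f j) <= K ^ j)%R ->
  (Cmod (Csum T (fun i => f (S n + i)%nat * RtoC y ^ (S n + i))%C)
     <= 2 * K ^ (S n) * y ^ (S n))%R.
Proof.
  intros HK Hy HKy Hf. eapply Rle_trans; [apply Cmod_Csum_le |].
  eapply Rle_trans.
  { apply (Rsum_le T _ (fun i => ((K * y) ^ (S n) * (K * y) ^ i)%R)).
    intros i _. rewrite Cmod_mult, Cmod_RtoC_pow, <- pow_add, Rpow_mult_distr by lra.
    apply Rmult_le_compat_r; [apply pow_le; lra | apply Hf]. }
  rewrite Rsum_scal, Rpow_mult_distr.
  pose proof (Rsum_geom_le_2 T (K * y) ltac:(nra)) as Hgeom.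
  replace (2 * K ^ (S n) * y ^ (S n))%R with (K ^ (S n) * y ^ (S n) * 2)%R by ring.
  apply Rmult_le_compat_l; [apply Rmult_le_pos; apply pow_le; lra | exact Hgeom].
Qed.

Lemma poly_coef_error_le (c beta : nat -> C) (L n : nat) (K y : R) (g : C) :
  (0 <= K)%R -> (0 < y)%R -> (K * y <= 1/2)%R -> (forall j, Cmod (c j) <= K ^ j)%R ->
  (forall j, (L <= j)%nat -> c j = 0) ->
  (Cmod (c n - beta n)%C * y ^ n
     <= Cmod (Csum L (fun j => c j * RtoC y ^ j) - g)%C
        + Cmod (g - Csum (S n) (fun j => beta j * RtoC y ^ j))%C
        + Cmod (Csum n (fun j => (c j - beta j) * RtoC y ^ j))%C
        + 2 * K ^ (S n) * y ^ (S n))%R.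
Proof.
  intros HK Hy HKy Hc Hz.
  set (tail := Csum (L - n) (fun i => c (S n + i)%nat * RtoC y ^ (S n + i))).
  assert (Hsplit : Csum L (fun j => c j * RtoC y ^ j) =
    Csum n (fun j => c j * RtoC y ^ j) + c n * RtoC y ^ n + tail).
  { rewrite (Csum_pad L (S n + (L - n)) (fun j => c j * RtoC y ^ j))
      by (lia || (intros; rewrite Hz by lia; ring)).
    rewrite Csum_add. reflexivity. }
  assert (Hid : (c n - beta n) * RtoC y ^ n =
    (Csum L (fun j => c j * RtoC y ^ j) - g)
    + (g - Csum (S n) (fun j => beta j * RtoC y ^ j))
    - Csum n (fun j => (c j - beta j) * RtoC y ^ j) - tail).
  { rewrite Hsplit, (Csum_ext n (fun j => (c j - beta j) * RtoC y ^ j)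
                                (fun j => c j * RtoC y ^ j - beta j * RtoC y ^ j))
      by (intros; ring).
    rewrite Csum_minus. change (Csum (S n) ?f) with (Csum n f + f n). cbv beta. ring. }
  rewrite <- (Cmod_RtoC_pow y n), <- Cmod_mult, Hid by lra.
  pose proof (Csum_tail_le c K y n (L - n) HK Hy HKy Hc) as Htail. fold tail in Htail.
  set (X1 := Csum L (fun j => c j * RtoC y ^ j) - g).
  set (X2 := g - Csum (S n) (fun j => beta j * RtoC y ^ j)).
  set (X3 := Csum n (fun j => (c j - beta j) * RtoC y ^ j)).
  pose proof (Cmod_triangle (X1 + X2 - X3) (- tail)) as H123.
  pose proof (Cmod_triangle (X1 + X2) (- X3)) as H12.
  pose proof (Cmod_triangle X1 X2).
  rewrite Cmod_opp in *. unfold Cminus in H123, H12 |- *. lra.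
Qed.

(* By strong induction on [n], evaluating at one small [y]: the lower
   coefficients have converged, the expansion error is [O(y^(n+1))], and the
   tail of each polynomial beyond [y^n] is [O((K y)^(n+1))] uniformly in [N]. *)
Lemma Ccv_coef_of_expansion (c : nat -> nat -> C) (L : nat -> nat) (beta : nat -> C) (K : R) :
  (1 <= K)%R ->
  (forall N n, Cmod (c N n) <= K ^ n)%R ->
  (forall N n, (L N <= n)%nat -> c N n = 0) ->
  (forall D, exists E, (0 <= E)%R /\ forall y, (0 < y <= 1)%R -> exists v,
       Ccv (fun N => Csum (L N) (fun n => c N n * RtoC y ^ n)) v /\
       (Cmod (v - Csum D (fun n => beta n * RtoC y ^ n))%C <= E * y ^ D)%R) ->
  forall n, Ccv (fun N => c N n) (beta n).
Proof.
  intros HK Hb Hz Hexp n.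
  induction n as [n IH] using (well_founded_induction lt_wf).
  intros eps Heps.
  destruct (Hexp (S n)) as [E [HE HEy]].
  set (W := (E + 2 * K ^ S n)%R).
  assert (HW : (0 < W)%R) by (pose proof (pow_lt K (S n) ltac:(lra)); unfold W; lra).
  set (y := Rmin (1 / (2 * K)) (eps / (2 * W))).
  assert (Hy0 : (0 < y)%R) by (apply Rmin_glb_lt; apply Rdiv_lt_0_compat; lra).
  assert (HKy : (K * y <= 1/2)%R).
  { assert (Hy : (y <= 1 / (2 * K))%R) by apply Rmin_l.
    apply (Rmult_le_compat_l K) in Hy; [| lra].
    replace (K * (1 / (2 * K)))%R with (1/2)%R in Hy by (field; lra). lra. }
  assert (HWy : (W * y <= eps / 2)%R).
  { assert (Hy : (y <= eps / (2 * W))%R) by apply Rmin_r.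
    apply (Rmult_le_compat_l W) in Hy; [| lra].
    replace (W * (eps / (2 * W)))%R with (eps / 2)%R in Hy by (field; lra). lra. }
  assert (Hyn : (0 < y ^ n)%R) by (apply pow_lt; lra).
  destruct (HEy y ltac:(nra)) as [g [Hg Hgerr]].
  assert (Hlow : Ccv (fun N => Csum n (fun j => (c N j - beta j) * RtoC y ^ j)) 0).
  { rewrite <- (Csum_eq_0 n (fun j => (beta j - beta j) * RtoC y ^ j)) by (intros; ring).
    apply Ccv_Csum. intros j Hj. apply Ccv_mult; [| apply Ccv_const].
    apply Ccv_plus; [apply IH; auto | apply Ccv_const]. }
  assert (Hd : (0 < eps / 4 * y ^ n)%R) by (apply Rmult_lt_0_compat; lra).
  destruct (Hg _ Hd) as [N1 HN1], (Hlow _ Hd) as [N2 HN2].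
  exists (N1 + N2)%nat. intros N HN.
  specialize (HN1 N ltac:(lia)). specialize (HN2 N ltac:(lia)).
  replace (Csum n (fun j => (c N j - beta j) * RtoC y ^ j) - 0)
    with (Csum n (fun j => (c N j - beta j) * RtoC y ^ j)) in HN2 by ring.
  pose proof (poly_coef_error_le (c N) beta (L N) n K y g ltac:(lra) Hy0 HKy (Hb N) (Hz N)).
  assert (E * y ^ S n + 2 * K ^ S n * y ^ S n = W * y * y ^ n)%R by (unfold W; simpl; ring).
  assert (W * y * y ^ n <= eps / 2 * y ^ n)%R by (apply Rmult_le_compat_r; lra).
  apply (Rmult_lt_reg_r (y ^ n)); lra.
Qed.

(** * The coefficients of [1F1(a;c;z) 1F1(a;c;-z)] *)

Lemma RtoC_neq_0 x : x <> 0%R -> RtoC x <> 0.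
Proof. intros H E. apply H, RtoC_inj, E. Qed.

Lemma RtoC_INR_S k : RtoC (INR (S k)) = RtoC (INR k) + 1.
Proof. rewrite S_INR, RtoC_plus. reflexivity. Qed.

Lemma RtoC_INR_add j k : RtoC (INR (j + k)) = RtoC (INR j) + RtoC (INR k).
Proof. rewrite plus_INR, RtoC_plus. reflexivity. Qed.

Lemma RtoC_INR_double n : RtoC (INR (2 * n)) = 2 * RtoC (INR n).
Proof. replace (2 * n)%nat with (n + n)%nat by lia. rewrite RtoC_INR_add. ring. Qed.

Lemma RtoC_INR_add_pos_neq_0 k (r : R) : (0 < r)%R -> RtoC (INR k) + RtoC r <> 0.
Proof. intros Hr. rewrite <- RtoC_plus. apply RtoC_neq_0. pose proof (pos_INR k). lra. Qed.

Lemma RtoC_INR_fact_neq_0 p : RtoC (INR (fact p)) <> 0.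
Proof. apply RtoC_neq_0, INR_fact_neq_0. Qed.

Lemma poch_S x n : poch x (S n) = poch x n * (x + RtoC (INR n)).
Proof. reflexivity. Qed.

Lemma poch_neq_0 c p : (forall k, c + RtoC (INR k) <> 0) -> poch c p <> 0.
Proof.
  intros Hc. induction p; simpl; [apply RtoC_neq_0; lra |].
  apply Cmult_neq_0; auto.
Qed.

Lemma neg1_pow_double n : (-1) ^ (2 * n) = 1.
Proof.
  induction n; [reflexivity |]. replace (2 * S n)%nat with (S (S (2 * n))) by lia.
  rewrite !Cpow_S, IHn. ring.
Qed.

Lemma neg1_pow_sq i : (-1) ^ i * (-1) ^ i = 1.
Proof.
  rewrite <- Cpow_add_r. replace (i + i)%nat with (2 * i)%nat by lia. apply neg1_pow_double.
Qed.

Lemma Cmod_neg1_pow n : Cmod ((-1) ^ n) = 1%R.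
Proof. rewrite Cmod_pow, Cmod_R, Rabs_m1. apply pow1. Qed.

Definition hyp_coef (a c : C) (p : nat) : C := poch a p / poch c p / RtoC (INR (fact p)).

Lemma hyp1F1_partial_Csum a c z N :
  hyp1F1_partial a c z N = Csum N (fun p => hyp_coef a c p * z ^ p).
Proof. apply Csum_ext. intros. unfold hyp_coef, Cdiv. ring. Qed.

Lemma hyp_coef_0 a c : hyp_coef a c 0 = 1.
Proof. unfold hyp_coef. simpl. field. Qed.

Lemma hyp_coef_S a c p : (forall k, c + RtoC (INR k) <> 0) ->
  hyp_coef a c (S p)
  = hyp_coef a c p * (a + RtoC (INR p)) / ((RtoC (INR p) + 1) * (c + RtoC (INR p))).
Proof.
  intros Hc. unfold hyp_coef. simpl poch.
  replace (fact (S p)) with (S p * fact p)%nat by reflexivity.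
  rewrite mult_INR, RtoC_mult, RtoC_INR_S.
  pose proof (poch_neq_0 c p Hc). pose proof (RtoC_INR_fact_neq_0 p). pose proof (Hc p).
  pose proof (RtoC_INR_add_pos_neq_0 p 1 Rlt_0_1).
  field. repeat split; auto.
Qed.

Definition Cconv (f g : nat -> C) (m : nat) : C := Csum (S m) (fun i => f i * g (m - i)%nat).

Definition sym_term (a c : C) (m j : nat) : C := (-1) ^ j * hyp_coef a c j * hyp_coef a c (m - j).

Definition sym_coef (a c : C) (m : nat) : C :=
  Cconv (fun j => (-1) ^ j * hyp_coef a c j) (hyp_coef a c) m.

Lemma sym_coef_odd a c n : sym_coef a c (2 * n + 1) = 0.
Proof.
  set (m := (2 * n + 1)%nat).
  assert (Hm : (-1) ^ m = -1) by (unfold m; rewrite Cpow_add_r, neg1_pow_double; simpl; ring).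
  assert (E : sym_coef a c m = - sym_coef a c m).
  { unfold sym_coef, Cconv. rewrite Csum_rev at 1. rewrite <- Csum_opp.
    apply Csum_ext. intros i Hi.
    replace (S m - 1 - i)%nat with (m - i)%nat by lia. replace (m - (m - i))%nat with i by lia.
    assert (Hsign : (-1) ^ (m - i) = - (-1) ^ i).
    { rewrite <- (Cmult_1_r ((-1) ^ (m - i))), <- (neg1_pow_sq i), Cmult_assoc, <- Cpow_add_r.
      replace (m - i + i)%nat with m by lia. rewrite Hm. ring. }
    rewrite Hsign. ring. }
  replace (sym_coef a c m) with ((sym_coef a c m - - sym_coef a c m) / 2)
    by (field; apply RtoC_neq_0; lra).
  rewrite <- E. unfold Cdiv. ring.
Qed.

(* Creative telescoping (Zeilberger's algorithm) applied to [sym_term]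
   produces the recurrence [rec_coef_hi * u (m+2) = rec_coef_lo * u m]
   together with the certificate [sym_cert]; [cert_poly] is the numerator
   polynomial of the certificate, in [M = m] and [J = j]. *)
Definition cert_poly (a c M J : C) : C :=
  let p3 := M + 2*a in
  let p2 := -4*M - 3*M^2 - c*M - 8*a - 6*a*M - 2*a*c in
  let p1 := 5*M + 7*M^2 + 2*M^3 - c*M^2 - 2*c^2 - 2*c^2*M + 10*a + 16*a*M + 5*a*M^2
            + 6*a*c + a*c*M - 2*a*c^2 in
  let p0 := -2*M - 4*M^2 - 2*M^3 + c*M + 2*c*M^2 + 2*c*M^3 + 2*c^2 + c^2*M + 2*c^2*M^2
            - 2*c^3 - 4*a - 10*a*M - 5*a*M^2 - 4*a*c + 3*a*c*M + 5*a*c*M^2 + 6*a*c^2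
            + 7*a*c^2*M + 2*a*c^3 in
  p0 + p1*J + p2*J^2 + p3*J^3.

Definition rec_coef_hi (c M : C) : C := (M + 2) * (2*c + M) * (c + M) * (c + M + 1).

Definition rec_coef_lo (a b M : C) : C := (2*a + M) * (2*b + M).

Definition sym_cert (a c : C) (m j : nat) : C :=
  (-1) ^ j * hyp_coef a c j * hyp_coef a c (m + 1 - j)
  * (- RtoC (INR j) * cert_poly a c (RtoC (INR m)) (RtoC (INR j)))
  / (RtoC (INR (m + 2 - j)) * (c + RtoC (INR (m + 1 - j)))).

Section SymCoefRecurrence.

Variables a b : C.
Hypothesis Hab : forall k, a + b + RtoC (INR k) <> 0.

Lemma sym_cert_0 m : sym_cert a (a + b) m 0 = 0.
Proof. unfold sym_cert. simpl INR. rewrite Copp_0. unfold Cdiv. ring. Qed.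

Lemma sym_term_telescope m j : (j <= m)%nat ->
  rec_coef_hi (a + b) (RtoC (INR m)) * sym_term a (a + b) (m + 2) j
  - rec_coef_lo a b (RtoC (INR m)) * sym_term a (a + b) m j
  = sym_cert a (a + b) m (S j) - sym_cert a (a + b) m j.
Proof.
  intros Hj. replace m with (j + (m - j))%nat by lia. generalize (m - j)%nat. intros k.
  unfold sym_term, sym_cert.
  replace (j + k + 2 - j)%nat with (S (S k)) by lia.
  replace (j + k - j)%nat with k by lia.
  replace (j + k + 1 - S j)%nat with k by lia.
  replace (j + k + 2 - S j)%nat with (S k) by lia.
  replace (j + k + 1 - j)%nat with (S k) by lia.
  rewrite !(hyp_coef_S a (a + b)), Cpow_S, !RtoC_INR_S, !RtoC_INR_add by auto.
  pose proof (poch_neq_0 (a + b) j Hab). pose proof (Hab j). pose proof (Hab k).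
  pose proof (Hab (S k)) as HSk. rewrite RtoC_INR_S in HSk.
  pose proof (RtoC_INR_add_pos_neq_0 j 1 Rlt_0_1).
  pose proof (RtoC_INR_add_pos_neq_0 k 1 Rlt_0_1).
  pose proof (RtoC_INR_add_pos_neq_0 k 2 ltac:(lra)).
  unfold rec_coef_hi, rec_coef_lo, cert_poly. cbv zeta.
  replace (RtoC (INR k) + 1 + 1) with (RtoC (INR k) + 2) by ring.
  field. repeat split; auto.
Qed.

Lemma sym_cert_boundary m :
  sym_cert a (a + b) m (S m)
  + rec_coef_hi (a + b) (RtoC (INR m))
    * (sym_term a (a + b) (m + 2) (S m) + sym_term a (a + b) (m + 2) (S (S m))) = 0.
Proof.
  unfold sym_cert, sym_term.
  replace (m + 2 - S m)%nat with 1%nat by lia. replace (m + 1 - S m)%nat with 0%nat by lia.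
  replace (m + 2 - S (S m))%nat with 0%nat by lia.
  rewrite (hyp_coef_S a (a + b) (S m)), (hyp_coef_S a (a + b) 0), hyp_coef_0 by auto.
  rewrite !Cpow_S, !RtoC_INR_S. simpl INR.
  pose proof (Hab 0) as H0. pose proof (Hab (S m)) as HSm. rewrite RtoC_INR_S in HSm.
  simpl INR in H0. rewrite Cplus_0_r in H0.
  pose proof (RtoC_INR_add_pos_neq_0 m 2 ltac:(lra)).
  unfold rec_coef_hi, cert_poly. cbv zeta.
  replace (RtoC (INR m) + 1 + 1) with (RtoC (INR m) + 2) by ring.
  field. repeat split; auto.
Qed.

Lemma sym_coef_rec m :
  rec_coef_hi (a + b) (RtoC (INR m)) * sym_coef a (a + b) (m + 2)
  = rec_coef_lo a b (RtoC (INR m)) * sym_coef a (a + b) m.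
Proof.
  set (hi := rec_coef_hi (a + b) (RtoC (INR m))).
  set (lo := rec_coef_lo a b (RtoC (INR m))).
  assert (Htel : Csum (S m) (fun j => hi * sym_term a (a + b) (m + 2) j
                                      - lo * sym_term a (a + b) m j)
                 = sym_cert a (a + b) m (S m)).
  { rewrite (Csum_telescope _ _ (sym_cert a (a + b) m)), sym_cert_0
      by (intros; apply sym_term_telescope; lia).
    ring. }
  rewrite Csum_minus, !Csum_scal in Htel.
  pose proof (sym_cert_boundary m) as Hbd. fold hi in Hbd.
  unfold sym_coef, Cconv. fold (sym_term a (a + b) (m + 2)) (sym_term a (a + b) m).
  replace (S (m + 2)) with (S (S (S m))) by lia.
  change (Csum (S (S (S m))) ?f) with (Csum (S m) f + f (S m) + f (S (S m))).
  rewrite <- Htel in Hbd.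
  set (X := Csum (S m) (sym_term a (a + b) (m + 2))) in *.
  set (Y := Csum (S m) (sym_term a (a + b) m)) in *.
  transitivity ((hi * X - lo * Y
                 + hi * (sym_term a (a + b) (m + 2) (S m)
                         + sym_term a (a + b) (m + 2) (S (S m)))) + lo * Y); [ring |].
  rewrite Hbd. ring.
Qed.

Definition sym_coef_closed (n : nat) : C :=
  poch a n * poch b n / (RtoC (INR (fact n)) * poch (a + b) n * poch (a + b) (2 * n)).

Lemma sym_coef_even n : sym_coef a (a + b) (2 * n) = sym_coef_closed n.
Proof.
  induction n.
  - unfold sym_coef, Cconv, sym_coef_closed. simpl. rewrite hyp_coef_0. simpl. field.
  - pose proof (Hab n) as Hn. pose proof (Hab (2 * n)) as H2n. pose proof (Hab (S (2 * n))) as H2n1.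
    rewrite RtoC_INR_double in H2n. rewrite RtoC_INR_S, RtoC_INR_double in H2n1.
    assert (Hn2 : 2 * RtoC (INR n) + 2 <> 0).
    { replace (2 * RtoC (INR n) + 2) with (2 * (RtoC (INR n) + 1)) by ring.
      apply Cmult_neq_0; [apply RtoC_neq_0; lra | apply RtoC_INR_add_pos_neq_0, Rlt_0_1]. }
    assert (Hcn : 2 * (a + b) + 2 * RtoC (INR n) <> 0).
    { replace (2 * (a + b) + 2 * RtoC (INR n)) with (2 * (a + b + RtoC (INR n))) by ring.
      apply Cmult_neq_0; auto. apply RtoC_neq_0; lra. }
    assert (Hhi : rec_coef_hi (a + b) (RtoC (INR (2 * n))) <> 0).
    { unfold rec_coef_hi. rewrite RtoC_INR_double.
      replace (a + b + 2 * RtoC (INR n) + 1) with (a + b + (2 * RtoC (INR n) + 1)) by ring.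
      repeat apply Cmult_neq_0; auto. }
    replace (2 * S n)%nat with (2 * n + 2)%nat by lia.
    transitivity (rec_coef_hi (a + b) (RtoC (INR (2 * n))) * sym_coef a (a + b) (2 * n + 2)
                  / rec_coef_hi (a + b) (RtoC (INR (2 * n)))); [field; auto |].
    rewrite sym_coef_rec, IHn. unfold sym_coef_closed, rec_coef_hi, rec_coef_lo in *.
    replace (2 * S n)%nat with (S (S (2 * n))) by lia. rewrite !poch_S.
    replace (fact (S n)) with (S n * fact n)%nat by reflexivity.
    rewrite (mult_INR (S n)), RtoC_mult, !RtoC_INR_S, !RtoC_INR_double.
    pose proof (poch_neq_0 (a + b) n Hab). pose proof (poch_neq_0 (a + b) (2 * n) Hab).
    pose proof (RtoC_INR_fact_neq_0 n). pose proof (RtoC_INR_add_pos_neq_0 n 1 Rlt_0_1).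
    field. repeat split; auto.
Qed.

Lemma sym_coef_series_double D z :
  Csum (2 * D) (fun m => sym_coef a (a + b) m * z ^ m)
  = Csum D (fun n => sym_coef_closed n * (z ^ 2) ^ n).
Proof.
  rewrite Csum_double. apply Csum_ext. intros n _.
  rewrite sym_coef_odd, sym_coef_even, Cpow_mult_r. ring.
Qed.

End SymCoefRecurrence.

Lemma Csum_Cconv_pow (f g : nat -> C) (x : C) M :
  Csum M (fun m => Cconv f g m * x ^ m)
  = Csum M (fun i => f i * x ^ i * Csum (M - i) (fun j => g j * x ^ j)).
Proof.
  induction M; [reflexivity |].
  change (Csum (S M) (fun m => Cconv f g m * x ^ m))
    with (Csum M (fun m => Cconv f g m * x ^ m) + Cconv f g M * x ^ M).
  rewrite IHM.
  change (Csum (S M) (fun i => f i * x ^ i * Csum (S M - i) (fun j => g j * x ^ j)))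
    with (Csum M (fun i => f i * x ^ i * Csum (S M - i) (fun j => g j * x ^ j))
          + f M * x ^ M * Csum (S M - M) (fun j => g j * x ^ j)).
  replace (S M - M)%nat with 1%nat by lia.
  rewrite (Csum_ext M (fun i => f i * x ^ i * Csum (S M - i) (fun j => g j * x ^ j))
    (fun i => f i * x ^ i * Csum (M - i) (fun j => g j * x ^ j) + f i * g (M - i)%nat * x ^ M)).
  2: { intros i Hi. replace (S M - i)%nat with (S (M - i)) by lia. simpl Csum at 1.
       replace (x ^ M) with (x ^ i * x ^ (M - i)) by (rewrite <- Cpow_add_r; f_equal; lia).
       ring. }
  rewrite Csum_plus. unfold Cconv.
  change (Csum (S M) (fun i => f i * g (M - i)%nat))
    with (Csum M (fun i => f i * g (M - i)%nat) + f M * g (M - M)%nat).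
  rewrite Cmult_plus_distr_r, Csum_mult_r, Nat.sub_diag. simpl Csum. ring.
Qed.

Lemma Cmod_Csum_shift_pow_le (g : nat -> C) (x : C) k i :
  (Cmod x <= 1)%R ->
  (Cmod (Csum i (fun l => g (k + l)%nat * x ^ (k + l))%C)
     <= Cmod x ^ k * Rsum (k + i) (fun j => Cmod (g j)))%R.
Proof.
  intros Hx. pose proof (Cmod_ge_0 x) as Hx0.
  eapply Rle_trans; [apply Cmod_Csum_le |].
  eapply Rle_trans.
  { apply (Rsum_le i _ (fun l => (Cmod x ^ k * Cmod (g (k + l)%nat))%R)).
    intros l _. rewrite Cmod_mult, Cmod_pow, Rmult_comm, pow_add.
    apply Rmult_le_compat_r; [apply Cmod_ge_0 |].
    pose proof (pow_le_1 (Cmod x) l ltac:(lra)). pose proof (pow_le (Cmod x) k Hx0).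
    nra. }
  rewrite Rsum_scal, Rsum_add. apply Rmult_le_compat_l; [apply pow_le; lra |].
  assert (0 <= Rsum k (fun j => Cmod (g j)))%R by (apply Rsum_nonneg; intros; apply Cmod_ge_0).
  lra.
Qed.

Lemma Cconv_trunc_le (f g : nat -> C) (x : C) M :
  (Cmod x <= 1)%R ->
  (Cmod (Csum M (fun i => f i * x ^ i) * Csum M (fun j => g j * x ^ j)
         - Csum M (fun m => Cconv f g m * x ^ m))%C
   <= Rsum M (fun i => Cmod (f i)) * Rsum M (fun i => Cmod (g i)) * Cmod x ^ M)%R.
Proof.
  intros Hx. pose proof (Cmod_ge_0 x) as Hx0.
  rewrite Csum_Cconv_pow, Csum_mult_r, <- Csum_minus.
  set (G := Rsum M (fun i => Cmod (g i))).
  eapply Rle_trans; [apply Cmod_Csum_le |].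
  eapply Rle_trans with (Rsum M (fun i => Cmod (f i) * G * Cmod x ^ M)%R).
  2: { rewrite (Rsum_ext M _ (fun i => (G * Cmod x ^ M) * Cmod (f i))%R) by (intros; ring).
       rewrite Rsum_scal. lra. }
  apply Rsum_le. intros i Hi.
  replace M with ((M - i) + i)%nat at 1 by lia. rewrite Csum_add.
  replace (f i * x ^ i * (Csum (M - i) (fun j => g j * x ^ j)
             + Csum i (fun l => g (M - i + l)%nat * x ^ (M - i + l)))
           - f i * x ^ i * Csum (M - i) (fun j => g j * x ^ j))
    with (f i * x ^ i * Csum i (fun l => g (M - i + l)%nat * x ^ (M - i + l))) by ring.
  rewrite !Cmod_mult, Cmod_pow.
  pose proof (Cmod_Csum_shift_pow_le g x (M - i) i Hx) as Htail.
  replace (M - i + i)%nat with M in Htail by lia. fold G in Htail.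
  replace (Cmod x ^ M)%R with (Cmod x ^ i * Cmod x ^ (M - i))%R
    by (rewrite <- pow_add; f_equal; lia).
  pose proof (Cmod_ge_0 (f i)). pose proof (pow_le (Cmod x) i Hx0).
  apply (Rmult_le_compat_l (Cmod (f i) * Cmod x ^ i)) in Htail; [| nra].
  lra.
Qed.

Lemma Cpow_coef_geom_bound (f : nat -> C) v :
  Ccv (fun N => Csum N (fun p => f p * 2 ^ p)) v ->
  exists K, (0 <= K)%R /\ forall p, (Cmod (f p) <= K * (1/2) ^ p)%R.
Proof.
  intros H. destruct (Ccv_bounded _ _ H) as [B [HB0 HB]].
  exists (2 * B)%R. split; [lra |]. intros p.
  assert (Hterm : (Cmod (f p * 2 ^ p) <= 2 * B)%R).
  { replace (f p * 2 ^ p) with (Csum (S p) (fun p => f p * 2 ^ p) - Csum p (fun p => f p * 2 ^ p))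
      by (simpl; ring).
    pose proof (Cmod_triangle (Csum (S p) (fun p => f p * 2 ^ p)) (- Csum p (fun p => f p * 2 ^ p)))
      as Htri.
    rewrite Cmod_opp in Htri. pose proof (HB (S p)). pose proof (HB p). unfold Cminus. lra. }
  rewrite Cmod_mult, Cmod_pow, Cmod_R, Rabs_pos_eq in Hterm by lra.
  assert (Hhalf : ((1/2) ^ p * 2 ^ p = 1)%R)
    by (rewrite <- Rpow_mult_distr; replace (1/2 * 2)%R with 1%R by field; apply pow1).
  pose proof (pow_lt (1/2) p ltac:(lra)).
  replace (Cmod (f p)) with (Cmod (f p) * 2 ^ p * (1/2) ^ p)%R
    by (rewrite Rmult_assoc, (Rmult_comm (2 ^ p)), Hhalf; ring).
  apply Rmult_le_compat_r; lra.
Qed.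

Lemma Rsum_pow_tail_le (f : nat -> C) (K r : R) M T :
  (0 <= K)%R -> (0 <= r <= 1)%R -> (forall p, Cmod (f p) <= K * (1/2) ^ p)%R ->
  (Rsum T (fun l => Cmod (f (M + l)%nat) * r ^ (M + l)) <= 2 * K * r ^ M)%R.
Proof.
  intros HK Hr Hf.
  eapply Rle_trans with (Rsum T (fun l => K * r ^ M * (1/2) ^ l)%R).
  { apply Rsum_le. intros l _. specialize (Hf (M + l)%nat). rewrite !pow_add in *.
    pose proof (pow_le r M ltac:(lra)). pose proof (pow_le r l ltac:(lra)).
    pose proof (pow_le_1 r l Hr). pose proof (pow_le_1 (1/2) M ltac:(lra)).
    pose proof (pow_le (1/2) M ltac:(lra)). pose proof (pow_le (1/2) l ltac:(lra)).
    pose proof (Cmod_ge_0 (f (M + l)%nat)).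
    assert (K * ((1/2) ^ M * (1/2) ^ l) <= K * (1/2) ^ l)%R
      by (apply Rmult_le_compat_l; nra).
    assert (Cmod (f (M + l)%nat) * (r ^ M * r ^ l) <= Cmod (f (M + l)%nat) * r ^ M)%R
      by (apply Rmult_le_compat_l; nra).
    assert (Cmod (f (M + l)%nat) * r ^ M <= K * (1/2) ^ l * r ^ M)%R
      by (apply Rmult_le_compat_r; lra).
    lra. }
  rewrite Rsum_scal. pose proof (Rsum_geom_le_2 T (1/2) ltac:(lra)) as Hgeom.
  pose proof (pow_le r M ltac:(lra)).
  replace (2 * K * r ^ M)%R with (K * r ^ M * 2)%R by ring.
  apply Rmult_le_compat_l; [apply Rmult_le_pos; lra | exact Hgeom].
Qed.

Lemma Cmod_Csum_pow_le (f : nat -> C) (K : R) z M :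
  (0 <= K)%R -> (Cmod z <= 1)%R -> (forall p, Cmod (f p) <= K * (1/2) ^ p)%R ->
  (Cmod (Csum M (fun p => f p * z ^ p)%C) <= 2 * K)%R.
Proof.
  intros HK Hz Hf. eapply Rle_trans; [apply Cmod_Csum_le |].
  pose proof (Rsum_pow_tail_le f K (Cmod z) 0 M HK (conj (Cmod_ge_0 z) Hz) Hf) as H.
  simpl in H. rewrite Rmult_1_r in H. eapply Rle_trans; [| exact H].
  apply Rsum_le. intros. rewrite Cmod_mult, Cmod_pow. lra.
Qed.

Lemma Csum_pow_tail_le (f : nat -> C) (K : R) z v M :
  (0 <= K)%R -> (Cmod z <= 1)%R -> (forall p, Cmod (f p) <= K * (1/2) ^ p)%R ->
  Ccv (fun N => Csum N (fun p => f p * z ^ p)) v ->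
  (Cmod (v - Csum M (fun p => f p * z ^ p))%C <= 2 * K * Cmod z ^ M)%R.
Proof.
  intros HK Hz Hf Hv. apply (Ccv_le_limit _ _ _ _ M Hv). intros N HN.
  replace N with (M + (N - M))%nat by lia. rewrite Csum_add.
  replace (Csum M (fun p => f p * z ^ p) + Csum (N - M) (fun i => f (M + i)%nat * z ^ (M + i))
           - Csum M (fun p => f p * z ^ p))
    with (Csum (N - M) (fun i => f (M + i)%nat * z ^ (M + i))) by ring.
  eapply Rle_trans; [apply Cmod_Csum_le |].
  eapply Rle_trans;
    [| apply (Rsum_pow_tail_le f K (Cmod z) M (N - M) HK (conj (Cmod_ge_0 z) Hz) Hf)].
  apply Rsum_le. intros. rewrite Cmod_mult, Cmod_pow. lra.
Qed.

Lemma Rsum_Cmod_geom_le (f : nat -> C) (K : R) M :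
  (0 <= K)%R -> (forall p, Cmod (f p) <= K * (1/2) ^ p)%R ->
  (Rsum M (fun p => Cmod (f p)) <= 2 * K)%R.
Proof.
  intros HK Hf. pose proof (Rsum_pow_tail_le f K 1 0 M HK ltac:(lra) Hf) as H.
  rewrite pow1, Rmult_1_r in H. eapply Rle_trans; [| exact H].
  right. apply Rsum_ext. intros. rewrite pow1. simpl. ring.
Qed.

Lemma Ccv_hyp1F1_opp a c z v : is_hyp1F1 a c (- z) v ->
  Ccv (fun N => Csum N (fun p => (-1) ^ p * hyp_coef a c p * z ^ p)) v.
Proof.
  apply Ccv_ext. intros N. rewrite hyp1F1_partial_Csum.
  apply Csum_ext. intros p _.
  replace (- z) with ((-1) * z) by ring. rewrite Cpow_mult_l. ring.
Qed.

Lemma Cmod_mult_sub_le v1 v2 t1 t2 s (e B d : R) :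
  (Cmod (v1 - t1) <= e)%R -> (Cmod (v2 - t2) <= e)%R -> (Cmod t1 <= B)%R ->
  (Cmod v2 <= 2 * B)%R -> (Cmod (t2 * t1 - s) <= d)%R ->
  (Cmod (v1 * v2 - s) <= e * (2 * B) + B * e + d)%R.
Proof.
  intros H1 H2 Ht1 Hv2 H12.
  replace (v1 * v2 - s) with ((v1 - t1) * v2 + t1 * (v2 - t2) + (t2 * t1 - s)) by ring.
  pose proof (Cmod_triangle ((v1 - t1) * v2 + t1 * (v2 - t2)) (t2 * t1 - s)).
  pose proof (Cmod_triangle ((v1 - t1) * v2) (t1 * (v2 - t2))).
  rewrite !Cmod_mult in *.
  assert (Cmod (v1 - t1) * Cmod v2 <= e * (2 * B))%R
    by (apply Rmult_le_compat; auto using Cmod_ge_0).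
  assert (Cmod t1 * Cmod (v2 - t2) <= B * e)%R
    by (apply Rmult_le_compat; auto using Cmod_ge_0).
  lra.
Qed.

Lemma hyp1F1_sym_product_le a b K D z v1 v2 :
  (forall k, a + b + RtoC (INR k) <> 0) -> (0 <= K)%R ->
  (forall p, Cmod (hyp_coef a (a + b) p) <= K * (1/2) ^ p)%R -> (Cmod z <= 1)%R ->
  is_hyp1F1 a (a + b) z v1 -> is_hyp1F1 a (a + b) (- z) v2 ->
  (Cmod (v1 * v2 - Csum D (fun n => sym_coef_closed a b n * (z ^ 2) ^ n))%C
     <= 16 * K ^ 2 * Cmod z ^ (2 * D))%R.
Proof.
  intros Hab HK HA Hz H1 H2.
  set (A := hyp_coef a (a + b)) in *. set (A' := fun j => (-1) ^ j * A j).
  set (M := (2 * D)%nat).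
  assert (HA' : forall p, (Cmod (A' p) <= K * (1/2) ^ p)%R)
    by (intros; unfold A'; rewrite Cmod_mult, Cmod_neg1_pow, Rmult_1_l; auto).
  assert (Hv1 : Ccv (fun N => Csum N (fun p => A p * z ^ p)) v1).
  { eapply Ccv_ext; [intros; apply hyp1F1_partial_Csum | exact H1]. }
  pose proof (Ccv_hyp1F1_opp _ _ _ _ H2) as Hv2. fold A in Hv2.
  set (T1 := Csum M (fun p => A p * z ^ p)).
  set (T2 := Csum M (fun p => A' p * z ^ p)).
  assert (HxM : (0 <= Cmod z ^ M <= 1)%R)
    by (split; [apply pow_le | apply pow_le_1; split]; auto using Cmod_ge_0).
  assert (R2 := Csum_pow_tail_le A' K z v2 M HK Hz HA' Hv2). fold T2 in R2.
  assert (Bv2 : (Cmod v2 <= 2 * (2 * K))%R).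
  { pose proof (Cmod_triangle (v2 - T2) T2) as Htri.
    replace (v2 - T2 + T2) with v2 in Htri by ring.
    pose proof (Cmod_Csum_pow_le A' K z M HK Hz HA') as B2. fold T2 in B2.
    assert (2 * K * Cmod z ^ M <= 2 * K)%R
      by (rewrite <- (Rmult_1_r (2 * K)) at 2; apply Rmult_le_compat_l; lra).
    lra. }
  assert (B12 : (Cmod (T2 * T1 - Csum M (fun m => Cconv A' A m * z ^ m))%C
                 <= 2 * K * (2 * K) * Cmod z ^ M)%R).
  { eapply Rle_trans; [apply Cconv_trunc_le; exact Hz |].
    apply Rmult_le_compat_r; [lra |].
    pose proof (Rsum_nonneg M (fun p => Cmod (A' p)) ltac:(intros; apply Cmod_ge_0)).
    pose proof (Rsum_nonneg M (fun p => Cmod (A p)) ltac:(intros; apply Cmod_ge_0)).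
    apply Rmult_le_compat; auto using Rsum_Cmod_geom_le. }
  replace (Csum M (fun m => Cconv A' A m * z ^ m))
    with (Csum D (fun n => sym_coef_closed a b n * (z ^ 2) ^ n)) in B12
    by (symmetry; exact (sym_coef_series_double a b Hab D z)).
  eapply Rle_trans.
  { apply (Cmod_mult_sub_le _ _ T1 T2 _ _ (2 * K) _ (Csum_pow_tail_le A K z v1 M HK Hz HA Hv1)
             R2 (Cmod_Csum_pow_le A K z M HK Hz HA) Bv2 B12). }
  fold M. nra.
Qed.

(** * The Weierstrass product *)

Lemma Cexp_mult_opp u : Cexp u * Cexp (- u) = 1.
Proof.
  unfold Cexp. destruct u as [r t]. simpl. rewrite cos_neg, sin_neg.
  assert (E : (exp r * exp (- r) = 1)%R)
    by (rewrite <- exp_plus, Rplus_opp_r; apply exp_0).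
  apply injective_projections; simpl; [| ring].
  replace (exp r * cos t * (exp (- r) * cos t) - exp r * sin t * (exp (- r) * - sin t))%R
    with ((exp r * exp (- r)) * (Rsqr (sin t) + Rsqr (cos t)))%R by (unfold Rsqr; ring).
  rewrite E, sin2_cos2. ring.
Qed.

Lemma Ccv_weierstrass_sym (al s : C) (w : nat -> C) v1 v2 :
  Ccv (fun N => Cexp (al * s) * Cprod N (fun k => (1 - s * w k) * Cexp (s * w k))) v1 ->
  Ccv (fun N => Cexp (al * - s) * Cprod N (fun k => (1 - - s * w k) * Cexp (- s * w k))) v2 ->
  Ccv (fun N => Csum (S N) (fun n => esym (fun k => w k ^ 2) n N * (- s ^ 2) ^ n)) (v1 * v2).
Proof.
  intros H1 H2. eapply Ccv_ext; [| exact (Ccv_mult _ _ _ _ H1 H2)]. intros N. cbv beta.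
  rewrite <- Cprod_1_plus_esym.
  replace (al * - s) with (- (al * s)) by ring.
  transitivity (Cexp (al * s) * Cexp (- (al * s))
                * (Cprod N (fun k => (1 - s * w k) * Cexp (s * w k))
                   * Cprod N (fun k => (1 - - s * w k) * Cexp (- s * w k)))); [ring |].
  rewrite Cexp_mult_opp, Cprod_mult, Cmult_1_l. apply Cprod_ext. intros k _.
  replace (- s * w k) with (- (s * w k)) by ring.
  transitivity ((1 - s * w k) * (1 + s * w k) * (Cexp (s * w k) * Cexp (- (s * w k)))); [ring |].
  rewrite Cexp_mult_opp. ring.
Qed.

Lemma weierstrass_sq_sum_bounded a b w : weierstrass_zeros a b w ->
  exists B, (0 <= B)%R /\ forall N, (Rsum N (fun k => Cmod (w k ^ 2)) <= B)%R.
Proof.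
  intros [[S HS] _]. destruct (Ccv_bounded _ _ HS) as [B [HB0 HB]].
  exists B. split; [exact HB0 |]. intros N. specialize (HB N).
  rewrite Csum_RtoC, Cmod_R, Rabs_pos_eq in HB
    by (apply Rsum_nonneg; intros; apply pow_le, Cmod_ge_0).
  rewrite (Rsum_ext N _ (fun k => (Cmod (w k) ^ 2)%R)) by (intros; apply Cmod_pow).
  exact HB.
Qed.

Lemma Ccv_esym_sq a b w :
  (forall k, a + b + RtoC (INR k) <> 0) -> weierstrass_zeros a b w ->
  forall n, Ccv (fun N => esym (fun k => w k ^ 2) n N * (-1) ^ n) (sym_coef_closed a b n).
Proof.
  intros Hab Hw. pose proof Hw as [_ Hprod].
  destruct (Hprod 2) as [v2 [Hv2 _]].
  destruct (Cpow_coef_geom_bound (hyp_coef a (a + b)) v2) as [K [HK HA]].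
  { eapply Ccv_ext; [intros; apply hyp1F1_partial_Csum | exact Hv2]. }
  destruct (weierstrass_sq_sum_bounded a b w Hw) as [B [HB0 HB]].
  apply (Ccv_coef_of_expansion _ S _ (B + 1)); [lra | | |].
  - intros N n. rewrite Cmod_mult, Cmod_neg1_pow, Rmult_1_r.
    eapply Rle_trans; [apply Cmod_esym_le | apply pow_incr].
    split; [apply Rsum_nonneg; intros; apply Cmod_ge_0 | specialize (HB N); lra].
  - intros N n Hn. rewrite esym_eq_0 by lia. ring.
  - intros D. exists (16 * K ^ 2)%R. split; [nra |]. intros y Hy.
    set (s := sqrt y).
    assert (Hs : (0 <= s <= 1)%R).
    { split; [apply sqrt_pos | rewrite <- sqrt_1; apply sqrt_le_1_alt; lra]. }
    assert (Hsy : (s ^ 2 = y)%R) by (simpl; rewrite Rmult_1_r; apply sqrt_sqrt; lra).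
    assert (Hss : RtoC s ^ 2 = RtoC y) by (rewrite <- RtoC_pow, Hsy; reflexivity).
    destruct (Hprod (RtoC s)) as [v1 [H1 P1]], (Hprod (- RtoC s)) as [v3 [H3 P3]].
    exists (v1 * v3). split.
    + eapply Ccv_ext; [| exact (Ccv_weierstrass_sym _ _ w _ _ P1 P3)]. intros N.
      apply Csum_ext. intros n _. rewrite Hss.
      replace (- RtoC y) with ((-1) * RtoC y) by ring. rewrite Cpow_mult_l. ring.
    + assert (Hz : (Cmod (RtoC s) <= 1)%R) by (rewrite Cmod_R, Rabs_pos_eq; lra).
      pose proof (hyp1F1_sym_product_le a b K D (RtoC s) v1 v3 Hab HK HA Hz H1 H3) as Hle.
      rewrite Hss, Cmod_R, Rabs_pos_eq, pow_mult, Hsy in Hle by lra.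
      exact Hle.
Qed.

Lemma Cplus_INR_neq_0 c : (forall m, c <> RtoC (- INR m)) -> forall k, c + RtoC (INR k) <> 0.
Proof.
  intros Hc k E. apply (Hc k). rewrite RtoC_opp.
  replace c with ((c + RtoC (INR k)) - RtoC (INR k)) by ring. rewrite E. ring.
Qed.

Lemma is_zeta2_closed_form a b w n :
  (forall k, a + b + RtoC (INR k) <> 0) -> weierstrass_zeros a b w ->
  is_zeta2 w n
    ((- 1) ^ n / RtoC (INR (fact n)) *
     (poch a n * poch b n / (poch (a + b) n * poch (a + b) (2 * n)%nat))).
Proof.
  intros Hab Hw.
  replace ((- 1) ^ n / RtoC (INR (fact n)) * _) with (sym_coef_closed a b n * (-1) ^ n).
  - pose proof (Ccv_mult _ _ _ _ (Ccv_esym_sq a b w Hab Hw n) (Ccv_const ((-1) ^ n))) as Hcv.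
    eapply Ccv_ext; [| exact Hcv].
    intros N. cbv beta. rewrite <- Cmult_assoc, neg1_pow_sq. ring.
  - pose proof (RtoC_INR_fact_neq_0 n).
    pose proof (poch_neq_0 _ n Hab). pose proof (poch_neq_0 _ (2 * n) Hab).
    unfold sym_coef_closed. field. repeat split; assumption.
Qed.

Lemma is_zeta2_eq w n v v' : is_zeta2 w n v -> v = v' -> is_zeta2 w n v'.
Proof. intros H <-. exact H. Qed.

(* Closes the side conditions [z <> 0] left by [field], where [z] is a
   rearrangement of [a + b + k] with [k <= 3]. *)
Ltac shifted_neq_0 Hc :=
  let E := fresh "E" in
  intro E; cbv beta in E;
  match type of E with
  | ?z = _ =>
      let close k := apply (Hc k); rewrite ?RtoC_INR_S; simpl INR;
                     transitivity z; [ring | exact E] in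
      first [close 0%nat | close 1%nat | close 2%nat | close 3%nat]
  end.

Theorem mainTheorem1 :
  forall (a b : C),
    (forall m : nat, a + b <> RtoC (- INR m)) ->
    forall w : nat -> C,
      weierstrass_zeros a b w ->
      (forall n : nat,
         is_zeta2 w n
           ((- 1) ^ n / RtoC (INR (fact n)) *
            (poch a n * poch b n / (poch (a + b) n * poch (a + b) (2 * n)%nat)))) /\
      is_zeta2 w 1 (- (a * b) / ((a + b) ^ 2 * (a + b + 1))) /\
      is_zeta2 w 2 (a * (1 + a) * b * (1 + b) /
                    (2 * (a + b) ^ 2 * (1 + a + b) ^ 2 * (2 + a + b) * (3 + a + b))).
Proof.
  intros a b Hab w Hw.
  pose proof (Cplus_INR_neq_0 _ Hab) as Hc.
  pose proof (fun n => is_zeta2_closed_form a b w n Hc Hw) as Hgen.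
  split; [exact Hgen | split].
  - apply (is_zeta2_eq w 1 _ _ (Hgen 1%nat)).
    simpl. rewrite ?RtoC_plus. field. repeat split; shifted_neq_0 Hc.
  - apply (is_zeta2_eq w 2 _ _ (Hgen 2%nat)).
    simpl. rewrite ?RtoC_plus. field. repeat split; shifted_neq_0 Hc.
Qed.
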